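(* In the binary model with $\lambda=g=\frac{\sqrt5-1}{2}$, the support $S$ of $\mu$ is almost surely totally disconnected.
   Context: Binary model. Let $T=\{1,2\}^*$ be the set of finite words over $\{1,2\}$ (the rooted binary tree; $v|j$ is the prefix of $v$ of length $j$). Let $\{a_v\}_{v\in T,\,|v|\ge1}$ be i.i.d. random variables with $\mathbb{P}(a_v=0)=\mathbb{P}(a_v=1)=\frac12$. Fix $\lambda\in(0,1)$. For $\omega\in\{1,2\}^{\mathbb{N}}$ put $f(\omega)=\sum_{j\ge1}a_{\omega|j}\lambda^j$. Let $\mu$ be the image under $f$ of the uniform product measure on $\{1,2\}^{\mathbb{N}}$, and $S=f(\{1,2\}^{\mathbb{N}})$ its (random, compact) support. *)

From HB Require Import structures.
From mathcomp Require Import all_boot all_order all_algebra.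
From mathcomp Require Import all_classical all_reals all_analysis.
Set Implicit Arguments. Unset Strict Implicit. Unset Printing Implicit Defensive.
Import Order.TTheory GRing.Theory Num.Theory.
Import numFieldNormedType.Exports.
Local Open Scope classical_set_scope.
Local Open Scope ring_scope.

(* Words over {1,2} are encoded as words over bool (1 ~ false, 2 ~ true).
   Finite words: seq bool; infinite words: nat -> bool. *)

Definition prefix (w : nat -> bool) (j : nat) : seq bool := mkseq w j.

Definition coding {R : realType} (a : seq bool -> bool) (lam : R)
  (w : nat -> bool) : R :=
  limn (fun n => \sum_(1 <= j < n) (a (prefix w j))%:R * lam ^+ j).

Definition supp_S {R : realType} (a : seq bool -> bool) (lam : R) : set R :=
  range (coding a lam).

Definition gold {R : realType} : R := (Num.sqrt 5 - 1) / 2.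

(* The family (a_v)_{|v|>=1} of random labels is i.i.d. with
   P(a_v = 0) = P(a_v = 1) = 1/2: each event {a_v = 1} is measurable and
   the joint law of every finite subfamily of distinct (nonempty) words is
   uniform, i.e. P(a_v = b_v for all v in s) = (1/2)^|s|. *)
Definition iid_fair_labels {d : measure_display} {T : measurableType d}
  {R : realType} (P : probability T R) (a : seq bool -> T -> bool) : Prop :=
  (forall v, measurable [set x | a v x]) /\
  (forall (s : seq (seq bool)) (b : seq bool -> bool),
     uniq s -> all (fun v => v != [::]) s ->
     P [set x | forall v, v \in s -> a v x = b v] = ((1/2) ^+ size s)%:E).

From Pilot Require Import Defs.
From HB Require Import structures.
From mathcomp Require Import all_boot all_order all_algebra.
From mathcomp Require Import all_classical all_reals all_analysis.
From mathcomp Require Import zify ring lra.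

Import Order.TTheory GRing.Theory Num.Theory.
Import numFieldNormedType.Exports.
Local Open Scope classical_set_scope.
Local Open Scope ring_scope.
Set Implicit Arguments. Unset Strict Implicit. Unset Printing Implicit Defensive.

(* Points of Z[g] are dense in R, so it suffices that S almost surely misses
   Z[g].  If f(w) = x + y g with x, y integers, the rescaled remainders
   g^-k (f(w) - sum_(j <= k) a_(w|j) g^j) are again of the form x_k + y_k g,
   lie in [0, 1 + g] and follow the integer dynamics
   (x, y) |-> (x + y - a_(w|k+1), x); an integer potential drives them into
   {0,1}^2, after which the labels along w are eventually constant or
   alternating.  For a fixed vertex u and such a pattern, a path of depth n
   below u follows it with probability at most 4/(n + 4), as for a critical
   binary branching process, so almost surely no infinite path does; there
   are countably many choices of u and pattern. *)

Fixpoint words (n : nat) : seq (seq bool) :=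
  if n is n'.+1 then map (cons true) (words n') ++ map (cons false) (words n')
  else [:: [::]].

Lemma mem_words n l : (l \in words n) = (size l == n).
Proof.
elim: n l => [|n IH] [|b l] //=; rewrite mem_cat.
  by apply/negbTE; rewrite negb_or; apply/andP; split; apply/mapP => -[].
have mem_cons c : (b :: l \in map (cons c) (words n)) = (b == c) && (size l == n).
  case: (eqVneq b c) => [->|bc]; first by rewrite mem_map ?IH // => ? ? [].
  by apply/mapP => -[? _ [/eqP]]; rewrite (negbTE bc).
by rewrite !mem_cons eqSS; clear mem_cons; case: b; rewrite /= ?orbF.
Qed.

Lemma size_words n : size (words n) = (2 ^ n)%N.
Proof. by elim: n => //= n IH; rewrite size_cat !size_map IH expnS mul2n addnn. Qed.

Lemma uniq_words n : uniq (words n).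
Proof.
elim: n => //= n IH; rewrite cat_uniq !map_inj_uniq ?IH ?andbT //; try by move=> ? ? [].
by apply/hasPn => l /mapP [l' _ ->]; apply/mapP => -[].
Qed.

Lemma count_words_cat (F1 F2 : pred (seq bool)) n1 n2 :
  count (fun l => F1 (take n1 l) && F2 (drop n1 l)) (words (n1 + n2)) =
  (count F1 (words n1) * count F2 (words n2))%N.
Proof.
elim: n1 F1 => [|n1 IH] F1 /=.
  under eq_count => l do rewrite take0 drop0.
  by case: (F1 [::]); rewrite ?mul1n // mul0n count_pred0.
by rewrite !count_cat !count_map mulnDl -!IH.
Qed.

Lemma count_words_predC (F : pred (seq bool)) n :
  count (predC F) (words n) = (2 ^ n - count F (words n))%N.
Proof. by rewrite -(size_words n) -(count_predC F (words n)) addKn. Qed.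

Definition distinct_nonempty (s : seq (seq bool)) :=
  uniq s && all (fun v => v != [::]) s.

Fixpoint descendants (n : nat) (u : seq bool) : seq (seq bool) :=
  if n is n'.+1 then (rcons u false :: descendants n' (rcons u false)) ++
                     (rcons u true :: descendants n' (rcons u true))
  else [::].

Lemma mem_descendants n u v : v \in descendants n u -> exists b w, v = u ++ b :: w.
Proof.
elim: n u => [|n IH] u //=.
rewrite -cat_cons mem_cat !inE -!cats1.
case/orP=> /orP[/eqP ->|/IH [b [w ->]]].
- by exists false, [::].
- by exists false, (b :: w); rewrite -catA.
- by exists true, [::].
- by exists true, (b :: w); rewrite -catA.
Qed.

Lemma mem_descendants_rcons n u b v : v \in rcons u b :: descendants n (rcons u b) ->
  exists w, v = u ++ b :: w.
Proof.
rewrite inE -cats1 => /orP[/eqP ->|/mem_descendants [c [w ->]]].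
- by exists [::].
- by exists (c :: w); rewrite -catA.
Qed.

Lemma notin_descendants n u : u \notin descendants n u.
Proof.
by apply/negP => /mem_descendants [b [w /(congr1 size)]]; rewrite size_cat /=; lia.
Qed.

Lemma distinct_nonempty_descendants n u : distinct_nonempty (descendants n u).
Proof.
apply/andP; split; last first.
  apply/allP => v /mem_descendants [b [w ->]].
  by apply/eqP => /(congr1 size); rewrite size_cat /= addnS.
elim: n u => [//|n IH] u; rewrite [descendants _ u]/=.
rewrite -cat_cons cat_uniq !cons_uniq !IH !notin_descendants !andbT.
apply/hasPn => v /mem_descendants_rcons [w ->]; apply/negP.
by move=> /mem_descendants_rcons [w' /eqP]; rewrite eqseq_cat // => /andP[_ /eqP []].
Qed.

(* [q |-> 1 - (1 - q/2)^2] is the survival recursion of a critical binary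
   branching process, and [4 / (n + 4)] the classical bound on survival to
   depth [n]. *)
Lemma survival_step (R : realFieldType) (m p0 p1 : R) : 0 <= m -> 0 <= p0 -> 0 <= p1 ->
  p0 * (m + 4) <= 4 -> p1 * (m + 4) <= 4 ->
  (1 - (1 - 1/2 * p0) * (1 - 1/2 * p1)) * (m + 1 + 4) <= 4.
Proof.
move=> m0 p00 p10 hp0 hp1; set be := 4 / (m + 4).
have hb : be * (m + 4) = 4 by rewrite /be divfK //; apply: lt0r_neq0; lra.
have be0 : 0 <= be by rewrite /be divr_ge0 //; lra.
have p0be : p0 <= be by rewrite /be ler_pdivlMr; lra.
have p1be : p1 <= be by rewrite /be ler_pdivlMr; lra.
have be1 : be <= 1 by nra.
have h1 : 1 - (1 - 1/2 * p0) * (1 - 1/2 * p1) <= be - be ^+ 2 / 4 by nra.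
have h2 : (be - be ^+ 2 / 4) * (m + 1 + 4) <= 4 by nra.
by apply: le_trans h2; apply: ler_wpM2r => //; lra.
Qed.

Lemma eq0_le_div_natD (R : realType) (c : R) (x : \bar R) : 0 < c -> (0 <= x)%E ->
  (forall n : nat, (x <= (c / (n%:R + c))%:E)%E) -> x = 0%E.
Proof.
move=> c0 x0 le_x; apply/eqP; rewrite eq_le x0 andbT.
case: x x0 le_x (le_x 0%N) => [r| |] //= r0 le_r _; rewrite lee_fin in r0 *.
rewrite leNgt; apply/negP => rpos.
have := archi_boundP (ltW (divr_gt0 c0 rpos)).
set k := Num.Def.archi_bound _ => hk.
have := le_r k; rewrite lee_fin ler_pdivlMr; last by have := ler0n R k; lra.
rewrite ltr_pdivrMr // in hk.
by have := ler0n R k; nra.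
Qed.

Section LabelEvents.
Variables (d : measure_display) (T : measurableType d) (R : realType)
  (P : probability T R) (a : seq bool -> T -> bool).
Hypothesis iid_a : iid_fair_labels P a.

Definition labels (s : seq (seq bool)) (x : T) : seq bool := [seq a v x | v <- s].

Lemma measurable_label v c : measurable [set x | a v x = c].
Proof.
case: c; first by rewrite (_ : [set x | _] = [set x | a v x]); [exact: iid_a.1|].
rewrite (_ : [set x | _] = ~` [set x | a v x]); first exact/measurableC/iid_a.1.
by apply/seteqP; split => x /=; case: (a v x).
Qed.

Lemma measurable_labels_eq s l : measurable [set x | labels s x = l].
Proof.
elim: s l => [|v s IH] [|c l].
- by rewrite (_ : [set x | _] = setT) //; apply/seteqP; split.
- by rewrite (_ : [set x | _] = set0) //; apply/seteqP; split.
- by rewrite (_ : [set x | _] = set0) //; apply/seteqP; split.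
rewrite (_ : [set x | _] = [set x | a v x = c] `&` [set x | labels s x = l]).
  exact: measurableI (measurable_label v c) (IH l).
by apply/seteqP; split => x /=; [case=> -> ->|case=> -> ->].
Qed.

Lemma prob_labels_eq s l : distinct_nonempty s -> size l = size s ->
  P [set x | labels s x = l] = ((1/2) ^+ size s)%:E.
Proof.
move=> /andP[us ns] sl.
rewrite -(iid_a.2 s (fun v => nth false l (index v s))) //; congr (P _).
apply/seteqP; split => x /=.
- move=> <- v vs; rewrite (nth_map [::]) ?index_mem // nth_index //.
- move=> Hx; apply: (@eq_from_nth _ false); first by rewrite size_map sl.
  move=> i; rewrite size_map => ilt.
  by rewrite (nth_map [::]) // Hx ?mem_nth // index_uniq.
Qed.

Lemma prob_bigsetU_labels_eq s (F : pred (seq bool)) (L : seq (seq bool)) :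
  distinct_nonempty s -> uniq L -> all (fun l => size l == size s) L ->
  P (\big[setU/set0]_(l <- L | F l) [set x | labels s x = l]) =
  ((count F L)%:R * (1/2) ^+ size s)%:E.
Proof.
move=> ds; elim: L => [_ _|l L IH /= /andP[lL uL] /andP[/eqP sl sL]].
  by rewrite big_nil measure0 mul0r.
rewrite big_cons; case: (F l); last by rewrite add0n IH.
rewrite measureU //=.
- by rewrite (prob_labels_eq ds sl) IH // -EFinD natrD mulrDl !mul1r.
- exact: measurable_labels_eq.
- by apply: bigsetU_measurable => t _; exact: measurable_labels_eq.
rewrite -bigcup_seq_cond; apply/seteqP; split => x //= [e1 [t /andP[tL _] /= e2]].
by move: lL; rewrite -e1 e2 tL.
Qed.

Lemma labels_preimage s (F : pred (seq bool)) :
  [set x | F (labels s x)] =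
  \big[setU/set0]_(l <- words (size s) | F l) [set x | labels s x = l].
Proof.
rewrite -bigcup_seq_cond; apply/seteqP; split => x /=.
- by move=> Fx; exists (labels s x) => //=; rewrite Fx andbT mem_words size_map.
- by move=> [t /andP[_ Ft] /= ->].
Qed.

Lemma measurable_labels s (F : pred (seq bool)) : measurable [set x | F (labels s x)].
Proof.
by rewrite labels_preimage; apply: bigsetU_measurable => t _; exact: measurable_labels_eq.
Qed.

Lemma prob_labels s (F : pred (seq bool)) : distinct_nonempty s ->
  P [set x | F (labels s x)] = ((count F (words (size s)))%:R * (1/2) ^+ size s)%:E.
Proof.
move=> ds; rewrite labels_preimage prob_bigsetU_labels_eq ?uniq_words //.
by apply/allP => l; rewrite mem_words.
Qed.

Definition determined_by s (G : set T) (p : R) := exists F : pred (seq bool),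
  G = [set x | F (labels s x)] /\ p = (count F (words (size s)))%:R * (1/2) ^+ size s.

Lemma determined_by_prob s G p : distinct_nonempty s -> determined_by s G p -> P G = p%:E.
Proof. by move=> ds [F [-> ->]]; rewrite prob_labels. Qed.

Lemma determined_by_measurable s G p : determined_by s G p -> measurable G.
Proof. by move=> [F [-> _]]; exact: measurable_labels. Qed.

Lemma determined_by_ge0 s G p : determined_by s G p -> 0 <= p.
Proof. by move=> [F [_ ->]]; rewrite mulr_ge0 // exprn_ge0. Qed.

Lemma determined_by_label v c : determined_by [:: v] [set x | a v x = c] (1/2).
Proof.
exists (fun l => head false l == c); split.
  by apply/seteqP; split => x /=; [move=> ->|move/eqP].
by case: c; rewrite /= expr1 ?add0n ?addn0 ?mul1r.
Qed.

Lemma determined_byI s1 s2 G1 G2 p1 p2 : determined_by s1 G1 p1 ->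
  determined_by s2 G2 p2 -> determined_by (s1 ++ s2) (G1 `&` G2) (p1 * p2).
Proof.
move=> [F1 [-> ->]] [F2 [-> ->]].
exists (fun l => F1 (take (size s1) l) && F2 (drop (size s1) l)); split.
  apply/seteqP; split => x /=; rewrite /labels map_cat take_size_cat ?drop_size_cat
    ?size_map //; first by move=> [-> ->].
  by move/andP.
by rewrite size_cat count_words_cat natrM exprD; ring.
Qed.

Lemma determined_byC s G p : determined_by s G p -> determined_by s (~` G) (1 - p).
Proof.
move=> [F [-> ->]]; exists (predC F); split.
  by apply/seteqP; split => x /=; move/negP.
rewrite count_words_predC natrB -?(size_words (size s)) ?count_size // size_words.
by rewrite mulrBl natrX -exprMn mul1r divff ?expr1n.
Qed.

Fixpoint follows_upto (n : nat) (u : seq bool) (pi : nat -> bool) : set T :=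
  if n is n'.+1 then
    [set x | exists b, a (rcons u b) x = pi 0%N /\
                       follows_upto n' (rcons u b) (fun j => pi j.+1) x]
  else setT.

Lemma follows_uptoS n u pi : follows_upto n.+1 u pi =
  ~` (~` ([set x | a (rcons u false) x = pi 0%N] `&`
          follows_upto n (rcons u false) (fun j => pi j.+1)) `&`
      ~` ([set x | a (rcons u true) x = pi 0%N] `&`
          follows_upto n (rcons u true) (fun j => pi j.+1))).
Proof.
rewrite setCI !setCK; apply/seteqP; split => x /=.
- by move=> [[] [H1 H2]]; [right|left].
- by move=> [[H1 H2]|[H1 H2]]; [exists false|exists true].
Qed.

Lemma follows_upto_determined n u pi : exists2 p,
  determined_by (descendants n u) (follows_upto n u pi) p & p * (n%:R + 4) <= 4.
Proof.
elim: n u pi => [|n IH] u pi.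
  exists 1; last by rewrite add0r mul1r.
  by exists predT; split; [apply/seteqP; split|rewrite /= expr0 mulr1].
have [p0 D0 b0] := IH (rcons u false) (fun j => pi j.+1).
have [p1 D1 b1] := IH (rcons u true) (fun j => pi j.+1).
have lab b := determined_by_label (rcons u b) (pi 0%N).
rewrite follows_uptoS; eexists.
  exact: determined_byC (determined_byI (determined_byC (determined_byI (lab false) D0))
                                        (determined_byC (determined_byI (lab true) D1))).
rewrite -[n.+1]addn1 natrD; apply: survival_step => //.
- exact: determined_by_ge0 D0.
- exact: determined_by_ge0 D1.
Qed.

Definition follows_forever (u : seq bool) (pi : nat -> bool) : set T :=
  [set x | exists w : nat -> bool, Defs.prefix w (size u) = u /\
     forall j, a (Defs.prefix w (size u + j.+1)) x = pi j].

Lemma follows_forever_upto n u pi : follows_forever u pi `<=` follows_upto n u pi.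
Proof.
elim: n u pi => [//|n IH] u pi x [w [wu wa]].
have e : rcons u (w (size u)) = Defs.prefix w (size u).+1.
  by rewrite /Defs.prefix mkseqS -/(Defs.prefix w (size u)) wu.
exists (w (size u)); split; first by rewrite e -addn1 (wa 0%N).
apply: IH; exists w; split; first by rewrite size_rcons e.
by move=> j; rewrite size_rcons -(wa j.+1) addSnnS.
Qed.

Lemma follows_forever_negligible u pi : P.-negligible (follows_forever u pi).
Proof.
have mE n : measurable (follows_upto n u pi).
  by have [p D _] := follows_upto_determined n u pi; exact: determined_by_measurable D.
exists (\bigcap_n follows_upto n u pi); split.
- exact: bigcapT_measurable.
- apply: (@eq0_le_div_natD _ 4) => // n.
  have [p D hp] := follows_upto_determined n u pi.
  apply: (@le_trans _ _ (P (follows_upto n u pi))).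
    by apply: le_measure; rewrite ?inE //; [exact: bigcapT_measurable|exact: bigcap_inf].
  by rewrite (determined_by_prob (distinct_nonempty_descendants n u) D) lee_fin ler_pdivlMr.
- by apply: sub_bigcap => n _; exact: follows_forever_upto.
Qed.
End LabelEvents.

Lemma geometric_sumE (R : comPzRingType) (x : R) m n : (m <= n)%N ->
  (1 - x) * \sum_(m <= j < n) x ^+ j = x ^+ m - x ^+ n.
Proof.
elim: n => [|n IH]; first by rewrite leqn0 => /eqP ->; rewrite big_geq // mulr0 subrr.
rewrite leq_eqVlt => /orP[/eqP <-|]; first by rewrite big_geq // mulr0 subrr.
by rewrite ltnS => mn; rewrite big_nat_recr //= mulrDr IH // exprS; ring.
Qed.

Section Coding.
Variables (R : realType) (al : seq bool -> bool) (lam : R) (w : nat -> bool).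
Hypotheses (lam_gt0 : 0 < lam) (lam_lt1 : lam < 1).

Definition partial_coding (n : nat) : R :=
  \sum_(1 <= j < n) (al (Defs.prefix w j))%:R * lam ^+ j.

Lemma partial_coding_sub m n : (1 <= m <= n)%N ->
  0 <= partial_coding n - partial_coding m /\
  (1 - lam) * (partial_coding n - partial_coding m) <= lam ^+ m.
Proof.
move=> /andP[m1 mn]; rewrite /partial_coding (big_cat_nat m1 mn) /= addrC addrK.
have lam0 : 0 <= lam by exact: ltW.
split; first by apply: sumr_ge0 => j _; rewrite mulr_ge0 ?exprn_ge0.
apply: (@le_trans _ _ ((1 - lam) * \sum_(m <= j < n) lam ^+ j)).
  apply: ler_wpM2l; first by rewrite subr_ge0 ltW.
  by apply: ler_sum => j _; case: (al _); rewrite ?mul1r ?mul0r ?exprn_ge0.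
by rewrite geometric_sumE // lerBlDr lerDl exprn_ge0.
Qed.

Lemma partial_coding_homo : {homo partial_coding : m n / (m <= n)%N >-> m <= n}.
Proof.
move=> [|m] n mn.
  rewrite [partial_coding 0]big_geq //; apply: sumr_ge0 => j _.
  by rewrite mulr_ge0 // exprn_ge0 // ltW.
by have [] := partial_coding_sub (m := m.+1) (n := n) mn; rewrite subr_ge0.
Qed.

Lemma partial_coding_cvg : cvgn partial_coding.
Proof.
apply: nondecreasing_is_cvgn; first exact: partial_coding_homo.
exists (1 - lam)^-1 => _ [[|n] _ <-].
  by rewrite /partial_coding big_geq // invr_ge0 subr_ge0 ltW.
have [_] := partial_coding_sub (m := 1) (n := n.+1) isT.
rewrite [partial_coding 1]big_geq // subr0 expr1 => h.
by rewrite -[X in _ <= X]mulr1 ler_pdivlMl ?subr_gt0 //; apply: le_trans h _; exact: ltW.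
Qed.

Lemma coding_partial_bounds m : (1 <= m)%N ->
  partial_coding m <= coding al lam w /\
  (1 - lam) * (coding al lam w - partial_coding m) <= lam ^+ m.
Proof.
move=> m1; have -> : coding al lam w = limn partial_coding by [].
split; first exact: nondecreasing_cvgn_le partial_coding_homo partial_coding_cvg m.
have lam1 : 0 < 1 - lam by rewrite subr_gt0.
rewrite -ler_pdivlMl // lerBlDr.
apply: limr_le; first exact: partial_coding_cvg.
apply: nearW => n; case: (leqP m n) => mn.
  by have [_] := partial_coding_sub (m := m) (n := n) (introT andP (conj m1 mn));
    rewrite -ler_pdivlMl // lerBlDr.
apply: le_trans (partial_coding_homo (ltnW mn)) _.
by rewrite lerDr mulr_ge0 // ?invr_ge0 ?exprn_ge0 // ltW.
Qed.
End Coding.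

Section Gold.
Variable R : realType.
Local Notation g := (gold : R).

Lemma gold_sqr : g ^+ 2 = 1 - g.
Proof.
have := @sqr_sqrtr R 5 (ler0n _ 5).
by rewrite /gold; set s := Num.sqrt 5; rewrite !expr2 => h; nra.
Qed.

Lemma gold_bounds : 618 / 1000 < g < 619 / 1000.
Proof.
have := @sqr_sqrtr R 5 (ler0n _ 5); have := @sqrtr_ge0 R 5.
by rewrite /gold; set s := Num.sqrt 5; rewrite expr2 => s0 h; apply/andP; split; nra.
Qed.

Lemma gold_gt0 : 0 < g. Proof. by have /andP[h _] := gold_bounds; lra. Qed.
Lemma gold_lt1 : g < 1. Proof. by have /andP[_ h] := gold_bounds; lra. Qed.

Lemma gold_shift (x y b : R) : x + y * g - b * g = g * (x + y - b + x * g).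
Proof. by rewrite mulrDr (mulrCA g x g) -expr2 gold_sqr; ring. Qed.
End Gold.

(* An integer consequence of [0 <= x + y g <= 1 + g], obtained from
   [0.618 < g < 0.619]; it is precise enough for [lia] to run the dynamics. *)
Definition gold_window (x y : int) : Prop :=
  [/\ (0 <= y -> 0 <= 1000 * x + 619 * y), (y < 0 -> 0 <= 1000 * x + 618 * y),
      (1 <= y -> 1000 * (x - 1) + 618 * (y - 1) <= 0) &
      (y < 1 -> 1000 * (x - 1) + 619 * (y - 1) <= 0)]%R.

Lemma gold_window_of_bounds (R : realType) (x y : int) :
  0 <= x%:~R + y%:~R * gold :> R -> x%:~R + y%:~R * gold <= 1 + gold :> R ->
  gold_window x y.
Proof.
move=> h1 h2; have /andP[gl gu] := @gold_bounds R.
split=> hy.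
- rewrite -(ler0z R) rmorphD !rmorphM /=.
  have : (0:R) <= y%:~R by rewrite ler0z.
  by nra.
- rewrite -(ler0z R) rmorphD !rmorphM /=.
  have : (y%:~R : R) < 0 by rewrite ltrz0.
  by nra.
- rewrite -(lerz0 R) rmorphD !rmorphM !rmorphB /=.
  have : (1:R) <= y%:~R by rewrite ler1z.
  by nra.
- rewrite -(lerz0 R) rmorphD !rmorphM !rmorphB /=.
  have : (y%:~R : R) < 1 by rewrite ltrz1.
  by nra.
Qed.

Definition unit_square (x y : int) := (0 <= x <= 1) && (0 <= y <= 1).

Lemma gold_window_step_norm (x y : int) (b : bool) :
  gold_window x y -> gold_window (x + y - b%:Z) x -> ~~ unit_square x y ->
  (absz (x + y - b%:Z)%R < absz y)%N.
Proof. by rewrite /unit_square; case: b => -[? ? ? ?] [? ? ? ?] /=; lia. Qed.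

Lemma gold_window_step_square (x y : int) (b : bool) :
  gold_window (x + y - b%:Z) x -> unit_square x y -> unit_square (x + y - b%:Z) x.
Proof. by rewrite /unit_square; case: b => -[? ? ? ?] /=; lia. Qed.

Lemma gold_window_step_diagonal (x : int) (b : bool) :
  gold_window (x + x - b%:Z) x -> unit_square x x -> b%:Z = x.
Proof. by rewrite /unit_square; case: b => -[? ? ? ?] /=; lia. Qed.

Lemma gold_window_step_swap (x y : int) (b : bool) :
  gold_window (x + y - b%:Z) x -> unit_square x y -> x + y - b%:Z != x -> b%:Z = x.
Proof. by rewrite /unit_square; case: b => -[? ? ? ?] /=; lia. Qed.

Definition label_pattern (c p : bool) (j : nat) : bool := c (+) (p && odd j).

Section GoldOrbit.
Variables (b : nat -> bool) (x0 y0 : int).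

(* If [r = x + y g] is the rescaled remainder of a coding, removing the next
   digit [b] and rescaling by [1/g = 1 + g] gives [(x + y - b) + x g]. *)
Fixpoint gold_orbit (k : nat) : int * int :=
  if k is k'.+1 then
    ((gold_orbit k').1 + (gold_orbit k').2 - (b k')%:Z, (gold_orbit k').1)
  else (x0, y0).

Hypothesis window_orbit : forall k, gold_window (gold_orbit k).1 (gold_orbit k).2.

Let in_square k := unit_square (gold_orbit k).1 (gold_orbit k).2.

Lemma gold_orbit_reaches_square : exists K, in_square K.
Proof.
pose norm k := (absz (gold_orbit k).1 + absz (gold_orbit k).2)%N.
suff H : forall m k, (norm k <= m)%N -> exists K, in_square K by exact: (H _ 0%N (leqnn _)).
elim=> [|m IH] k hk.
  exists k; move: hk; rewrite /norm /in_square leqn0 addn_eq0 !absz_eq0.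
  by move=> /andP[/eqP -> /eqP ->].
have [|out] := boolP (in_square k); first by exists k.
apply: (IH k.+1); move: hk (gold_window_step_norm (window_orbit k) (window_orbit k.+1) out).
by rewrite /norm /=; lia.
Qed.

Lemma gold_orbit_square_stable K j : in_square K -> in_square (K + j).
Proof.
move=> sq; elim: j => [|j IH]; first by rewrite addn0.
by rewrite addnS; exact: gold_window_step_square (window_orbit _.+1) IH.
Qed.

Lemma gold_orbit_diagonal K X : unit_square X X -> gold_orbit K = (X, X) ->
  forall j, gold_orbit (K + j) = (X, X) /\ b (K + j) = (X == 1).
Proof.
move=> sqX eK j; suff [e bX] : gold_orbit (K + j) = (X, X) /\ (b (K + j))%:Z = X.
  by split=> //; case: (b _) bX => /= <-.
elim: j => [|j [e _]].
  rewrite addn0; split=> //; apply: gold_window_step_diagonal sqX.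
  by have := window_orbit K.+1; rewrite /= eK.
have wX : gold_window (X + X - (b (K + j))%:Z) X.
  by have := window_orbit (K + j).+1; rewrite /= e.
have e' : gold_orbit (K + j.+1) = (X, X).
  by rewrite addnS /= e (gold_window_step_diagonal wX sqX) /= addrK.
split=> //; apply: gold_window_step_diagonal sqX.
by have := window_orbit (K + j.+1).+1; rewrite /= e'.
Qed.

Lemma gold_orbit_alternating K : in_square K ->
  (forall k, (K <= k)%N -> (gold_orbit k).1 != (gold_orbit k).2) ->
  forall j, b (K + j) = ((gold_orbit K).1 == 1) (+) odd j.
Proof.
move=> sqK off.
have sq i : in_square (K + i) := gold_orbit_square_stable i sqK.
have swap i : (b (K + i))%:Z = (gold_orbit (K + i)).1.
  apply: gold_window_step_swap (window_orbit (K + i).+1) (sq i) _.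
  exact: off (K + i).+1 (leqW (leq_addr _ _)).
have state i : (gold_orbit (K + i)).1 = (((gold_orbit K).1 == 1) (+) odd i)%:Z.
  elim: i => [|i IH].
    by move: (sq 0%N); rewrite addn0 /in_square /unit_square; case: eqP => /=; lia.
  move: (sq i) (off _ (leq_addr i K)) (swap i); rewrite addnS /= /in_square /unit_square IH.
  by rewrite addbN; case: (_ (+) _) => /=; lia.
by move=> j; move: (swap j); rewrite state; case: (b _); case: (_ (+) _).
Qed.

Lemma gold_orbit_label_pattern : exists K c p, forall j, b (K + j) = label_pattern c p j.
Proof.
have [K sqK] := gold_orbit_reaches_square.
case: (pselect (exists2 k, (K <= k)%N & (gold_orbit k).1 = (gold_orbit k).2)).
- move=> [k Kk diag]; exists k, ((gold_orbit k).1 == 1), false => j.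
  have sqk : in_square k by rewrite -(subnKC Kk); exact: gold_orbit_square_stable.
  rewrite /label_pattern andFb addbF; apply: (gold_orbit_diagonal _ _ j).2.
    by move: sqk; rewrite /in_square -diag.
  by case: (gold_orbit k) diag => ? ? /= ->.
- move=> diag; exists K, ((gold_orbit K).1 == 1), true => j.
  rewrite /label_pattern andTb; apply: gold_orbit_alternating => // k Kk.
  by apply/eqP => e; apply: diag; exists k.
Qed.
End GoldOrbit.

Section GoldCoding.
Variables (R : realType) (al : seq bool -> bool) (w : nat -> bool) (x0 y0 : int).
Local Notation g := (gold : R).
Hypothesis coding_gold_int : coding al g w = x0%:~R + y0%:~R * g.

Let digit k := al (Defs.prefix w k.+1).
Let orbit := gold_orbit digit x0 y0.

Lemma coding_remainder k : coding al g w - partial_coding al g w k.+1 =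
  g ^+ k * ((orbit k).1%:~R + (orbit k).2%:~R * g).
Proof.
elim: k => [|k IH].
  by rewrite /partial_coding big_geq // subr0 expr0 mul1r coding_gold_int.
rewrite /partial_coding big_nat_recr //= -/(partial_coding al g w k.+1) opprD addrA IH.
rewrite !rmorphB !rmorphD /= -pmulrn exprSr -mulrA -gold_shift.
by rewrite [_ * (_ * g)]mulrCA -mulrBr.
Qed.

Lemma gold_window_orbit k : gold_window (orbit k).1 (orbit k).2.
Proof.
have [lo hi] := coding_partial_bounds al w (gold_gt0 R) (gold_lt1 R) (ltn0Sn k).
have gk : 0 < g ^+ k by rewrite exprn_gt0 // gold_gt0.
rewrite -subr_ge0 (coding_remainder k) (pmulr_rge0 _ gk) in lo.
rewrite (coding_remainder k) exprSr mulrCA (ler_pM2l gk) in hi.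
apply: gold_window_of_bounds lo _.
have g1 : 0 < 1 - g by rewrite subr_gt0 gold_lt1.
have e : (1 - g) * (1 + g) = g.
  by rewrite (_ : _ * _ = 1 - g ^+ 2); [rewrite gold_sqr|]; ring.
by rewrite -subr_le0 -(pmulr_rle0 _ g1) mulrBr e subr_le0.
Qed.

Lemma coding_label_pattern :
  exists K c p, forall j, al (Defs.prefix w (K + j.+1)) = label_pattern c p j.
Proof.
have [K [c [p hp]]] := gold_orbit_label_pattern gold_window_orbit.
by exists K, c, p => j; rewrite addnS; exact: hp.
Qed.
End GoldCoding.

Lemma totally_disconnected_avoiding (R : realType) (D S : set R) :
  (forall p q, p < q -> exists2 z, D z & p < z < q) -> (forall z, D z -> ~ S z) ->
  totally_disconnected S.
Proof.
move=> dense avoid x Sx; apply/seteqP; split => y; last first.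
  by move=> ->; exact: connected_component_refl.
case=> C [Cx CS /connected_intervalP iC] Cy.
have between u v : C u -> C v -> u < v -> False.
  move=> Cu Cv uv; have [z Dz /andP[uz zv]] := dense u v uv.
  by apply: (avoid z Dz); apply/CS/(iC u v Cu Cv); rewrite !ltW.
by case: (ltgtP x y) => [xy|yx|->//]; exfalso; [exact: (between x y)|exact: (between y x)].
Qed.

Lemma dense_of_small_multiples (R : realType) (D : set R) :
  (forall e, 0 < e -> exists2 h, D h & 0 < h < e) ->
  (forall (m : int) z, D z -> D (m%:~R * z)) ->
  forall p q, p < q -> exists2 z, D z & p < z < q.
Proof.
move=> small mulD p q pq; have qp : 0 < q - p by rewrite subr_gt0.
have [h Dh /andP[h0 hqp]] := small (q - p) qp.
pose m := Num.Def.floor (p / h) + 1; exists (m%:~R * h); first exact: mulD.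
have := floor_le (p / h); have := floorD1_gt (p / h).
rewrite -/m ltr_pdivrMr // ler_pdivlMr // => pm mp.
have em : m%:~R = (Num.Def.floor (p / h))%:~R + 1 :> R by rewrite /m rmorphD.
by rewrite pm /= em mulrDl mul1r; lra.
Qed.

Section GoldIntegers.
Variable R : realType.
Local Notation g := (gold : R).

Definition gold_int : set R := [set z | exists x y : int, z = x%:~R + y%:~R * g].

Lemma gold_int_expr n : gold_int (g ^+ n).
Proof.
elim: n => [|n [x [y e]]]; first by exists 1, 0; rewrite expr0 mul0r addr0.
exists y, (x - y); rewrite exprS e rmorphB /= mulrDr mulrCA -expr2 gold_sqr.
by ring.
Qed.

Lemma gold_int_mulz (m : int) z : gold_int z -> gold_int (m%:~R * z).
Proof. by move=> [x [y ->]]; exists (m * x), (m * y); rewrite !rmorphM /=; ring. Qed.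

Lemma gold_int_dense p q : p < q -> exists2 z, gold_int z & p < z < q.
Proof.
apply: dense_of_small_multiples => [e e0|]; last exact: gold_int_mulz.
have g1 : `|g| < 1 by rewrite ger0_norm ?gold_lt1 // ltW // gold_gt0.
have [N _ small] := @cvgr_lt _ _ _ _ _ _ (cvg_expr g1) e e0.
exists (g ^+ N); first exact: gold_int_expr.
by rewrite exprn_gt0 ?gold_gt0 //=; apply: small => /=.
Qed.

Lemma supp_gold_int_pattern (al : seq bool -> bool) z :
  supp_S al g z -> gold_int z -> exists K c p (w : nat -> bool),
  forall j, al (Defs.prefix w (K + j.+1)) = label_pattern c p j.
Proof.
move=> [w _ <-] [x [y e]]; have [K [c [p hp]]] := coding_label_pattern e.
by exists K, c, p, w.
Qed.
End GoldIntegers.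

Lemma negligible_bigcup_countable d (T : measurableType d) (R : realType)
  (mu : {measure set T -> \bar R}) (I : countType) (F : I -> set T) :
  (forall i, mu.-negligible (F i)) -> mu.-negligible (\bigcup_i F i).
Proof.
move=> negF; pose G k := if unpickle k is Some i then F i else set0.
apply: negligibleS (negligible_bigcup (F := G) _).
  by move=> x [i _ Fx]; exists (pickle i); rewrite /G ?pickleK.
by move=> k; rewrite /G; case: unpickle => [i|]; [exact: negF|exact: negligible_set0].
Qed.

Theorem corollary1p6 (d : measure_display) (T : measurableType d)
  (R : realType) (P : probability T R) (a : seq bool -> T -> bool) :
  iid_fair_labels P a ->
  {ae P, forall x, totally_disconnected (supp_S (fun v => a v x) (gold : R))}.
Proof.
move=> iid_a.
pose bad := \bigcup_(i : seq bool * (bool * bool))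
  follows_forever a i.1 (label_pattern i.2.1 i.2.2).
have : P.-negligible bad.
  by apply: negligible_bigcup_countable => i; exact: follows_forever_negligible.
apply: negligibleS => x /= disc; apply: contrapT => good; apply: disc.
apply: (totally_disconnected_avoiding (@gold_int_dense R)) => z gz Sz.
have [K [c [p [w pat]]]] := supp_gold_int_pattern Sz gz.
apply: good; exists (Defs.prefix w K, (c, p)) => //=.
by exists w; rewrite size_mkseq.
Qed.
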